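(* For every $a\in C\ell_{1,2}$, $L(a^+)=L(a)^+$ and $R(a^+)=R(a)^+$, where on the right-hand sides $M^+$ denotes the Moore–Penrose inverse of a real matrix $M$.
   Context: $C\ell_{1,2}$ is the real Clifford algebra generated by $i_1,i_2,i_3$ with $i_1^2=1$, $i_2^2=i_3^2=-1$ and $i_ti_m=-i_mi_t$ for $t\neq m$, with real basis $e_0=1$, $e_1=i_1$, $e_2=i_2$, $e_3=i_1i_2$, $e_4=i_3$, $e_5=i_1i_3$, $e_6=i_2i_3$, $e_7=i_1i_2i_3$. For $x=\sum_{t=0}^7x_te_t$ write $\overrightarrow{x}=(x_0,\dots,x_7)^T$. $L(a)$, $R(a)$ are the real $8\times8$ matrices with $\overrightarrow{ax}=L(a)\overrightarrow{x}$, $\overrightarrow{xa}=R(a)\overrightarrow{x}$ for all $x$. The prime of $a=\sum a_te_t$ is $a'=a_0+a_1e_1-a_2e_2+a_3e_3-a_4e_4+a_5e_5-a_6e_6-a_7e_7$. For every $a$ there is a unique $x\in C\ell_{1,2}$ with $axa=a$, $xax=x$, $(ax)'=ax$, $(xa)'=xa$, denoted $a^+$ (the Moore–Penrose inverse of $a$). *)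

From mathcomp Require Import all_boot all_order all_algebra.
From mathcomp Require Import reals.
Set Implicit Arguments. Unset Strict Implicit. Unset Printing Implicit Defensive.
Import Order.TTheory GRing.Theory Num.Theory.
Local Open Scope ring_scope.

(* Basis index t in 'I_8 is read in binary: bit 0 <-> i1, bit 1 <-> i2,
   bit 2 <-> i3, generators taken in increasing order.  This matches
   e0=1,e1=i1,e2=i2,e3=i1i2,e4=i3,e5=i1i3,e6=i2i3,e7=i1i2i3. *)
Definition bit (i n : nat) : bool := odd (n %/ 2 ^ i).

(* e_s e_t = (-1)^(swaps + squares) e_(s xor t), with i1^2 = 1,
   i2^2 = i3^2 = -1. *)
(* number of transpositions needed to bring i_.. (from s) i_.. (from t) into
   increasing order: pairs (generator j of t, generator i of s) with i > j *)
Definition cl_swaps (s t : nat) : nat :=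
  (bit 0 t * (bit 1 s + bit 2 s) + bit 1 t * bit 2 s)%N.
Definition cl_sqneg (s t : nat) : nat :=
  ((bit 1 s && bit 1 t) + (bit 2 s && bit 2 t))%N.
Definition cl_sign (s t : nat) : int :=
  (-1) ^+ (cl_swaps s t + cl_sqneg s t).

Definition cl_mul (R : realType) (a b : 'cV[R]_8) : 'cV[R]_8 :=
  \col_(k < 8) \sum_(s < 8) \sum_(t < 8)
     (if Nat.lxor s t == k then (cl_sign s t)%:~R * a s 0 * b t 0 else 0).

Definition cl_basis (R : realType) (j : 'I_8) : 'cV[R]_8 := delta_mx j 0.

(* L(a), R(a): vec(a x) = L(a) vec(x), vec(x a) = R(a) vec(x). *)
Definition Lmx (R : realType) (a : 'cV[R]_8) : 'M[R]_8 :=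
  \matrix_(i < 8, j < 8) cl_mul a (cl_basis R j) i 0.
Definition Rmx (R : realType) (a : 'cV[R]_8) : 'M[R]_8 :=
  \matrix_(i < 8, j < 8) cl_mul (cl_basis R j) a i 0.

Definition prime_sign (i : nat) : int :=
  nth 1%:Z [:: 1; 1; -1; 1; -1; 1; -1; -1] i.
Definition cl_prime (R : realType) (a : 'cV[R]_8) : 'cV[R]_8 :=
  \col_(k < 8) ((prime_sign k)%:~R * a k 0).

Definition cl_is_mp (R : realType) (a x : 'cV[R]_8) : Prop :=
  [/\ cl_mul (cl_mul a x) a = a,
      cl_mul (cl_mul x a) x = x,
      cl_prime (cl_mul a x) = cl_mul a x &
      cl_prime (cl_mul x a) = cl_mul x a].

Definition mx_is_mp (R : realType) (n : nat) (M X : 'M[R]_n) : Prop :=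
  [/\ M *m X *m M = M,
      X *m M *m X = X,
      (M *m X)^T = M *m X &
      (X *m M)^T = X *m M].

(* Write e_s e_t = (-1)^(p s t) e_(s xor t).  The exponent p is a bilinear
   form over F_2 on the bit vectors of the indices, and the prime is
   a' = sum_k (-1)^(p k k) a_k e_k.  The regular representations have entries
   L(a)_(ij) = (-1)^(p (i xor j) j) a_(i xor j) and
   R(a)_(ij) = (-1)^(p j (j xor i)) a_(j xor i), and bilinearity of p reduces
   L(ab) = L(a) L(b), R(ab) = R(b) R(a), L(a)^T = L(a') and R(a)^T = R(a') to
   parity identities.  These carry the four Penrose equations for a and a^+
   over to the matrix Penrose equations for L(a), L(a^+) and R(a), R(a^+). *)

From Stdlib Require Import PeanoNat.
From mathcomp Require Import all_boot all_order all_algebra.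
From mathcomp Require Import reals ring.
Set Implicit Arguments. Unset Strict Implicit. Unset Printing Implicit Defensive.
Import GRing.Theory.
Local Open Scope ring_scope.

Lemma lxor_ord_ltn (s t : 'I_8) : (Nat.lxor s t < 8)%N.
Proof.
by case: s t => -[|[|[|[|[|[|[|[|//]]]]]]]] ? [] [|[|[|[|[|[|[|[|//]]]]]]]] ?.
Qed.

Definition ixor (s t : 'I_8) : 'I_8 := Ordinal (lxor_ord_ltn s t).

Lemma ixorC : commutative ixor.
Proof. by move=> s t; apply: val_inj; exact: Nat.lxor_comm. Qed.

Lemma ixorA : associative ixor.
Proof. by move=> s t u; apply: val_inj; symmetry; exact: Nat.lxor_assoc. Qed.

Lemma ixorK (s : 'I_8) : cancel (ixor s) (ixor s).
Proof.
move=> t; apply: val_inj => /=.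
by rewrite -Nat.lxor_assoc Nat.lxor_nilpotent Nat.lxor_0_l.
Qed.

Lemma eq_ixor (s t k : 'I_8) : (ixor s t == k) = (t == ixor s k).
Proof. by apply/eqP/eqP => [<-|->]; rewrite ixorK. Qed.

Definition cl_parity (s t : nat) : bool := odd (cl_swaps s t + cl_sqneg s t).

Lemma cl_parity_ixorl (s t u : 'I_8) :
  cl_parity (ixor s t) u = cl_parity s u (+) cl_parity t u.
Proof.
by case: s t u => -[|[|[|[|[|[|[|[|//]]]]]]]] ? [] [|[|[|[|[|[|[|[|//]]]]]]]] ?
  [] [|[|[|[|[|[|[|[|//]]]]]]]] ?.
Qed.

Lemma cl_parity_ixorr (s t u : 'I_8) :
  cl_parity s (ixor t u) = cl_parity s t (+) cl_parity s u.
Proof.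
by case: s t u => -[|[|[|[|[|[|[|[|//]]]]]]]] ? [] [|[|[|[|[|[|[|[|//]]]]]]]] ?
  [] [|[|[|[|[|[|[|[|//]]]]]]]] ?.
Qed.

Lemma prime_signE (k : 'I_8) : prime_sign k = (-1) ^+ cl_parity k k.
Proof. by case: k => -[|[|[|[|[|[|[|[|//]]]]]]]] ?. Qed.

Section RegularRepresentations.
Variable R : realType.
Implicit Types a b : 'cV[R]_8.

Lemma cl_signE (s t : nat) : (cl_sign s t)%:~R = (-1) ^+ cl_parity s t :> R.
Proof. by rewrite /cl_sign signr_odd rmorph_sign. Qed.

Lemma cl_mulE a b (k : 'I_8) :
  cl_mul a b k 0 =
    \sum_(s < 8) (-1) ^+ cl_parity s (ixor s k) * a s 0 * b (ixor s k) 0.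
Proof.
rewrite mxE; apply: eq_bigr => s _.
rewrite -big_mkcond (big_pred1 (ixor s k)) ?cl_signE // => t.
exact: eq_ixor.
Qed.

Lemma cl_primeE a (k : 'I_8) : cl_prime a k 0 = (-1) ^+ cl_parity k k * a k 0.
Proof. by rewrite mxE prime_signE rmorph_sign. Qed.

Lemma LmxE a (i j : 'I_8) :
  Lmx a i j = (-1) ^+ cl_parity (ixor i j) j * a (ixor i j) 0.
Proof.
rewrite mxE cl_mulE.
under eq_bigr => s _ do
  rewrite /cl_basis mxE andbT mulr_natr mulrb [ixor s i]ixorC eq_ixor.
by rewrite -big_mkcond big_pred1_eq (ixorK i j).
Qed.

Lemma RmxE a (i j : 'I_8) :
  Rmx a i j = (-1) ^+ cl_parity j (ixor j i) * a (ixor j i) 0.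
Proof.
rewrite mxE cl_mulE.
under eq_bigr => s _ do rewrite /cl_basis mxE andbT mulrAC mulr_natr mulrb.
by rewrite -big_mkcond big_pred1_eq.
Qed.

Lemma LmxM a b : Lmx (cl_mul a b) = Lmx a *m Lmx b.
Proof.
apply/matrixP=> i j; rewrite LmxE cl_mulE mulr_sumr mxE.
rewrite (reindex_inj (can_inj (ixorK i))); apply: eq_bigr => s _.
rewrite !LmxE ixorA [ixor (ixor i s) i]ixorC ixorK.
set x := ixor s j.
have signE : (-1) ^+ cl_parity (ixor i j) j * (-1) ^+ cl_parity (ixor i s) x
           = (-1) ^+ cl_parity (ixor i s) s * (-1) ^+ cl_parity x j :> R.
  rewrite -!signr_addb !cl_parity_ixorl !cl_parity_ixorr.
  by case: (cl_parity i j) (cl_parity j j) (cl_parity i s) (cl_parity s s)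
    (cl_parity s j) => [] [] [] [] [].
by rewrite !mulrA signE; ring.
Qed.

Lemma RmxM a b : Rmx (cl_mul a b) = Rmx b *m Rmx a.
Proof.
apply/matrixP=> i j; rewrite RmxE cl_mulE mulr_sumr mxE.
rewrite (reindex_inj (can_inj (ixorK j))); apply: eq_bigr => s _.
rewrite !RmxE ixorA [ixor (ixor j s) j]ixorC ixorK.
set y := ixor s i.
have signE : (-1) ^+ cl_parity j (ixor j i) * (-1) ^+ cl_parity (ixor j s) y
           = (-1) ^+ cl_parity s y * (-1) ^+ cl_parity j (ixor j s) :> R.
  rewrite -!signr_addb !cl_parity_ixorl !cl_parity_ixorr.
  by case: (cl_parity j j) (cl_parity j i) (cl_parity j s) (cl_parity s s)
    (cl_parity s i) => [] [] [] [] [].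
by rewrite !mulrA signE; ring.
Qed.

Lemma trmx_Lmx a : (Lmx a)^T = Lmx (cl_prime a).
Proof.
apply/matrixP=> i j; rewrite mxE !LmxE cl_primeE (ixorC j i) mulrA.
rewrite -signr_addb; congr ((-1) ^+ _ * _).
rewrite !cl_parity_ixorl !cl_parity_ixorr.
by case: (cl_parity i i) (cl_parity i j) (cl_parity j i) (cl_parity j j)
  => [] [] [] [].
Qed.

Lemma trmx_Rmx a : (Rmx a)^T = Rmx (cl_prime a).
Proof.
apply/matrixP=> i j; rewrite mxE !RmxE cl_primeE (ixorC j i) mulrA.
rewrite -signr_addb; congr ((-1) ^+ _ * _).
rewrite !cl_parity_ixorl !cl_parity_ixorr.
by case: (cl_parity i i) (cl_parity i j) (cl_parity j i) (cl_parity j j)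
  => [] [] [] [].
Qed.

End RegularRepresentations.

Theorem proposition3p2 (R : realType) (a ap : 'cV[R]_8) :
  cl_is_mp a ap ->
  mx_is_mp (Lmx a) (Lmx ap) /\ mx_is_mp (Rmx a) (Rmx ap).
Proof.
case=> axa xax ax_sym xa_sym; split; split.
- by rewrite -!LmxM axa.
- by rewrite -!LmxM xax.
- by rewrite -LmxM trmx_Lmx ax_sym.
- by rewrite -LmxM trmx_Lmx xa_sym.
- by rewrite -mulmxA -!RmxM axa.
- by rewrite -mulmxA -!RmxM xax.
- by rewrite -RmxM trmx_Rmx xa_sym.
- by rewrite -RmxM trmx_Rmx ax_sym.
Qed.
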